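(* Let $F=f+\Psi$ on $\mathbf{R}^n$, where $\Psi:\mathbf{R}^n\to\mathbf{R}\cup\{+\infty\}$ is proper, convex and closed, and $f$ is differentiable with $\|\nabla f(x)-\nabla f(y)\|_2\le L\|x-y\|_2$ for all $x,y\in\operatorname{dom}\Psi$, for some $L>0$. Let $F^\star=\min_xF(x)$ (assumed attained). Suppose $F$ satisfies the weak gradient-mapping dominance condition with parameter $\omega>0$: \[ \|G_L(x)\|_2\ge\sqrt{2\omega}\,\bigl(F(T_L(x))-F^\star\bigr)\qquad\forall x\in\operatorname{dom}\Psi. \] Then the proximal gradient method $x^{(k+1)}=T_L(x^{(k)})$, started from any $x^{(0)}\in\operatorname{dom}\Psi$, satisfies for all $k\ge0$ \[ F(x^{(k)})-F^\star\le\max\Bigl\{\frac{4L}{\omega k},\ \Bigl(\frac{\sqrt2}{2}\Bigr)^k\bigl(F(x^{(0)})-F^\star\bigr)\Bigr\}, \] where $\frac{4L}{\omega k}$ is interpreted as $+\infty$ for $k=0$.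
   Context: For a convex function $\phi$, $\operatorname{prox}_\phi(x)=\arg\min_y\{\phi(y)+\tfrac12\|y-x\|_2^2\}$. Define $T_L(x)=\operatorname{prox}_{\frac1L\Psi}\bigl(x-\frac1L\nabla f(x)\bigr)$ and the gradient mapping $G_L(x)=L\bigl(x-T_L(x)\bigr)$. The proximal gradient method with constant step size $1/L$ is $x^{(k+1)}=T_L(x^{(k)})$. *)

From HB Require Import structures.
From mathcomp Require Import all_boot all_order all_algebra.
From mathcomp Require Import all_classical all_reals all_analysis.
Set Implicit Arguments. Unset Strict Implicit. Unset Printing Implicit Defensive.
Import Order.TTheory GRing.Theory Num.Theory.
Import numFieldNormedType.Exports.
Local Open Scope classical_set_scope.
Local Open Scope ring_scope.

Section Defs.
Context {R : realType} {n : nat}.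

Definition dotv (x y : 'rV[R]_n) : R := \sum_(i < n) x 0 i * y 0 i.
Definition norm2 (x : 'rV[R]_n) : R := Num.sqrt (\sum_(i < n) (x 0 i) ^+ 2).

Definition dom (phi : 'rV[R]_n -> \bar R) : set 'rV[R]_n :=
  [set x | (phi x < +oo)%E].

Definition proper_fun (phi : 'rV[R]_n -> \bar R) : Prop :=
  (forall x, (-oo < phi x)%E) /\ (exists x, (phi x < +oo)%E).

Definition convex_fun (phi : 'rV[R]_n -> \bar R) : Prop :=
  forall (x y : 'rV[R]_n) (t : R), 0 < t < 1 ->
    (phi (t *: x + (1 - t) *: y)%R <= t%:E * phi x + (1 - t)%:E * phi y)%E.

(* closed = lower semicontinuous = all sublevel sets closed *)
Definition closed_fun (phi : 'rV[R]_n -> \bar R) : Prop :=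
  forall a : R, closed [set x | (phi x <= a%:E)%E].

(* y = prox_phi(x), i.e. y minimizes phi(y) + 1/2 ||y - x||_2^2
   (the minimizer is unique when phi is proper convex closed) *)
Definition is_prox (phi : 'rV[R]_n -> \bar R) (x y : 'rV[R]_n) : Prop :=
  forall z, (phi y + (2^-1 * norm2 (y - x) ^+ 2)%:E
              <= phi z + (2^-1 * norm2 (z - x) ^+ 2)%:E)%E.

Definition is_TL (Psi : 'rV[R]_n -> \bar R) (gradf : 'rV[R]_n -> 'rV[R]_n)
  (L : R) (x y : 'rV[R]_n) : Prop :=
  is_prox (fun z => (L^-1)%:E * Psi z)%E (x - L^-1 *: gradf x)%R y.

Definition GL (L : R) (x Tx : 'rV[R]_n) : 'rV[R]_n := L *: (x - Tx).

End Defs.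

From HB Require Import structures.
From mathcomp Require Import all_boot all_order all_algebra.
From mathcomp Require Import all_classical all_reals all_analysis.
From mathcomp Require Import ring lra zify.
Import Order.TTheory GRing.Theory Num.Theory.
Import numFieldNormedType.Exports.
Local Open Scope classical_set_scope.
Local Open Scope ring_scope.

(* Proof idea: one step x |-> T_L x decreases F by at least (L/2)|x - T_L x|^2,
   since the descent lemma bounds f and the optimality of the prox (x - grad f x / L - T_L x
   is a subgradient of Psi/L at T_L x) bounds Psi. As |G_L x| = L |x - T_L x|, the dominance
   condition turns this into r_{k+1} + (omega/L) r_{k+1}^2 <= r_k for the gaps
   r_k = F(x_k) - F*. Each step of such a sequence either halves r or, when r_k <= 2 r_{k+1},
   increases 1/r by at least omega/(2L); one of the two kinds occurs at least k/2 times
   among the first k steps, whence r_k <= 4L/(omega k) or r_k <= 2^(-k/2) r_0. *)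

Lemma ler_of_forall_itv01 {R : realFieldType} (c a b : R) :
  (forall t, 0 < t < 1 -> a <= b + t * c) -> a <= b.
Proof.
move=> H; rewrite leNgt; apply/negP => ltba.
set e := a - b; have e_gt0 : 0 < e by rewrite subr_gt0.
have ce_gt0 : 0 < `|c| + e by rewrite ltr_wpDl.
set t := e / (2 * (`|c| + e)).
have t_gt0 : 0 < t by rewrite divr_gt0 // mulr_gt0.
have tE : t * (2 * (`|c| + e)) = e by rewrite mulfVK // gt_eqF // mulr_gt0.
have tc : t * c <= t * `|c| by rewrite ler_wpM2l ?ler_norm // ltW.
have te : 0 < t * e by rewrite mulr_gt0.
have t_lt1 : t < 1.
  rewrite -(ltr_pM2r (_ : 0 < 2 * (`|c| + e))) ?mulr_gt0 // mul1r tE.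
  by have := normr_ge0 c; lra.
have := H t (andb_true_intro (conj t_gt0 t_lt1)); rewrite /e in tE te; lra.
Qed.

Section SufficientDecrease.
Context {R : rcfType} {c : R} {r : nat -> R}.
Hypotheses (c_gt0 : 0 < c) (r_ge0 : forall k, 0 <= r k)
  (r_decr : forall k, r k.+1 + c * r k.+1 ^+ 2 <= r k).

Lemma sufficient_decrease_split k : exists A B : nat,
  [/\ (A + B = k)%N, r k <= 2^-1 ^+ B * r 0 & A%:R * c * r k <= 2].
Proof.
elim: k => [|k [A [B [ABk rk_halved Ark]]]].
  by exists 0%N, 0%N; rewrite expr0 mul1r !mul0r.
have r0 := r_ge0 k; have r1 := r_ge0 k.+1; have dk := r_decr k.
have cr1_ge0 : 0 <= c * r k.+1 ^+ 2 by rewrite mulr_ge0 ?sqr_ge0 ?(ltW c_gt0).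
have [slow|fast] := leP (r k) (2 * r k.+1).
- exists A.+1, B; split; first by rewrite addSn ABk.
    by apply: le_trans rk_halved; lra.
  have A_ge0 : 0 <= A%:R :> R by [].
  have slow_gain : c * r k * r k.+1 <= 2 * (r k - r k.+1).
    have : c * r k * r k.+1 <= c * (2 * r k.+1) * r k.+1.
      by rewrite ler_wpM2r // ler_wpM2l // ltW.
    nra.
  have gain : (A%:R * c + c) * r k.+1 * r k <= 2 * r k by nra.
  rewrite -addn1 natrD mulrDl mul1r.
  have [rk_gt0|rk0] : 0 < r k \/ r k = 0 by rewrite lt_def; case: eqP => /=; auto.
  + by rewrite -(ler_pM2r rk_gt0).
  + have -> : r k.+1 = 0 by lra.
    by rewrite mulr0.
- exists A, B.+1; split; first by rewrite addnS ABk.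
    rewrite exprS -mulrA (le_trans (_ : r k.+1 <= 2^-1 * r k)) //; first lra.
    by rewrite ler_pM2l.
  by apply: le_trans Ark; rewrite ler_wpM2l ?mulr_ge0 ?(ltW c_gt0) //; lra.
Qed.

Lemma sufficient_decrease_rate k : (0 < k)%N ->
  r k <= 4 / (c * k%:R) \/ r k <= (Num.sqrt 2 / 2) ^+ k * r 0.
Proof.
move=> k_gt0; have [A [B [ABk rk_halved Ark]]] := sufficient_decrease_split k.
have [kA|kB] := leqP k (2 * A).
- left; rewrite ler_pdivlMr ?mulr_gt0 ?ltr0n //.
  have kA' : k%:R <= 2 * A%:R :> R by rewrite -natrM ler_nat.
  have : r k * (c * k%:R) <= r k * (c * (2 * A%:R)).
    by rewrite ler_wpM2l ?r_ge0 // ler_wpM2l ?(ltW c_gt0).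
  lra.
- right; apply: le_trans rk_halved _; rewrite ler_wpM2r //.
  have sqrt2_ge0 : 0 <= Num.sqrt 2 :> R := sqrtr_ge0 2.
  have sqrt2_sq : Num.sqrt 2 ^+ 2 = 2 :> R by rewrite sqr_sqrtr.
  have -> : 2^-1 ^+ B = (Num.sqrt 2 / 2) ^+ (2 * B) :> R.
    by rewrite exprM expr_div_n sqrt2_sq; congr (_ ^+ _); field.
  apply: ler_wiXn2l; first by rewrite divr_ge0.
    by rewrite ler_pdivrMr //; nra.
  lia.
Qed.

End SufficientDecrease.

Lemma is_derive_along_line {R : realType} {V : normedModType R} (f : V -> R^o)
    (x d : V) (t : R) :
  differentiable f (x + t *: d) ->
  is_derive t (1 : R) (fun s : R => f (x + s *: d)) ('d f (x + t *: d) d).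
Proof.
move=> df.
have quotE : (fun h : R => h^-1 *: (((fun s : R => f (x + s *: d)) \o shift t) (h *: 1)
                                     - f (x + t *: d)))
           = (fun h : R => h^-1 *: ((f \o shift (x + t *: d)) (h *: d) - f (x + t *: d))).
  apply/funext => h /=; congr (_ *: (_ - _)); congr f.
  by rewrite /shift [h%:A]mulr1 scalerDl addrCA addrA.
apply: DeriveDef; first by rewrite /derivable quotE; apply: diff_derivable.
by rewrite /derive quotE -deriveE.
Qed.

Section EuclideanSpace.
Context {R : realType} {n : nat}.
Implicit Types (u v w x y : 'rV[R]_n) (t : R).

Definition sqnorm2 v : R := \sum_(i < n) v 0 i ^+ 2.

Lemma sqnorm2_ge0 v : 0 <= sqnorm2 v.
Proof. by apply: sumr_ge0 => i _; apply: sqr_ge0. Qed.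

Lemma norm2_ge0 v : 0 <= norm2 v.
Proof. exact: sqrtr_ge0. Qed.

Lemma sqr_norm2 v : norm2 v ^+ 2 = sqnorm2 v.
Proof. by rewrite sqr_sqrtr // sqnorm2_ge0. Qed.

Lemma dotvBl u v w : dotv (u - v) w = dotv u w - dotv v w.
Proof. by rewrite /dotv -sumrB; apply: eq_bigr => i _; rewrite !mxE mulrBl. Qed.

Lemma sqnorm2Z t v : sqnorm2 (t *: v) = t ^+ 2 * sqnorm2 v.
Proof. by rewrite /sqnorm2 mulr_sumr; apply: eq_bigr => i _; rewrite mxE exprMn. Qed.

Lemma norm2Z t v : norm2 (t *: v) = `|t| * norm2 v.
Proof. by rewrite /norm2 -!/(sqnorm2 _) sqnorm2Z sqrtrM ?sqr_ge0 // sqrtr_sqr. Qed.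

Lemma sqnorm2_subC u v : sqnorm2 (u - v) = sqnorm2 (v - u).
Proof. by rewrite -opprB -scaleN1r sqnorm2Z sqrrN expr1n mul1r. Qed.

Lemma sqnorm2DZ u v t :
  sqnorm2 (u + t *: v) = sqnorm2 u + 2 * t * dotv u v + t ^+ 2 * sqnorm2 v.
Proof.
rewrite /sqnorm2 /dotv !mulr_sumr -!big_split /=.
by apply: eq_bigr => i _; rewrite !mxE; ring.
Qed.

Lemma dotv_young u v t : 2 * t * dotv u v <= sqnorm2 u + t ^+ 2 * sqnorm2 v.
Proof.
have := sqnorm2_ge0 (u + (- t) *: v).
by rewrite sqnorm2DZ sqrrN mulrN mulNr; lra.
Qed.

Lemma dotv_le_sqnorm2 u v t :
  0 < t -> sqnorm2 u <= t ^+ 2 * sqnorm2 v -> dotv u v <= t * sqnorm2 v.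
Proof.
move=> t_gt0 uv; rewrite -(ler_pM2l (_ : 0 < 2 * t)) ?mulr_gt0 //.
have -> : 2 * t * (t * sqnorm2 v) = 2 * (t ^+ 2 * sqnorm2 v) by ring.
by have := dotv_young u v t; lra.
Qed.

Lemma gradient_mapping_dominance {L omega r : R} {x y} :
  0 < L -> 0 < omega -> 0 <= r -> Num.sqrt (2 * omega) * r <= norm2 (GL L x y) ->
  omega / L * r ^+ 2 <= L / 2 * sqnorm2 (y - x).
Proof.
move=> L_gt0 omega_gt0 r_ge0.
rewrite -ler_sqr ?nnegrE ?mulr_ge0 ?sqrtr_ge0 ?norm2_ge0 //.
rewrite exprMn sqr_sqrtr ?mulr_ge0 ?(ltW omega_gt0) // sqr_norm2 sqnorm2Z sqnorm2_subC.
move=> dom; rewrite -(ler_pM2l (_ : 0 < 2 * L)) ?mulr_gt0 //.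
have -> : 2 * L * (omega / L * r ^+ 2) = 2 * omega * r ^+ 2 by field; rewrite gt_eqF.
have -> : 2 * L * (L / 2 * sqnorm2 (y - x)) = L ^+ 2 * sqnorm2 (y - x) by field.
exact: dom.
Qed.

Lemma descent_lemma (f : 'rV[R]_n -> R) (gradf : 'rV[R]_n -> 'rV[R]_n) (L : R) x y :
  (forall z, differentiable f z /\ forall v, 'd f z v = dotv (gradf z) v) ->
  (forall t, 0 < t < 1 ->
     dotv (gradf (x + t *: (y - x)) - gradf x) (y - x) <= L * t * sqnorm2 (y - x)) ->
  f y <= f x + dotv (gradf x) (y - x) + L / 2 * sqnorm2 (y - x).
Proof.
move=> f_diff grad_bound; set d := y - x; set N := sqnorm2 d.
pose D s := dotv (gradf (x + s *: d)) d.
have line_derive s : is_derive s (1 : R) (fun s => f (x + s *: d)) (D s).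
  by rewrite /D -(f_diff _).2; apply/is_derive_along_line/(f_diff _).1.
(* The quadratic correction makes h' nonpositive, so the mean value theorem suffices. *)
pose h s := f (x + s *: d) - s * D 0 - L / 2 * N * s ^+ 2.
have h_derive s : is_derive s (1 : R) h (D s - D 0 - L * N * s).
  apply: is_derive_eq; rewrite scaler0 add0r.
  rewrite -[(D 0)%:A]/(D 0 * 1) -[s%:A]/(s * 1) -[_ *: (_ + _)]/(_ * (_ + _)).
  by rewrite !mulr1 -mulr2n -mulr_natl; field.
have [c c01 hc] : exists2 c, c \in `]0, 1[ &
    h 1 - h 0 = (D c - D 0 - L * N * c) * (1 - 0).
  apply: MVT => //.
  by apply: derivable_within_continuous => s _; apply: ex_derive.
have h_decr : D c - D 0 - L * N * c <= 0.
  move: c01; rewrite in_itv /= => /grad_bound.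
  by rewrite /D scale0r addr0 -dotvBl -/d -/N; lra.
have : h 1 <= h 0 by rewrite -subr_le0 hc subr0 mulr1.
have yE : x + d = y by rewrite addrC subrK.
rewrite /h /D scale1r !scale0r !addr0 yE expr1n expr0n /=; lra.
Qed.

End EuclideanSpace.

Lemma le_fin_num {R : realDomainType} {a : \bar R} {b : R} :
  (-oo < a)%E -> (a <= b%:E)%E -> a \is a fin_num.
Proof.
by move=> a_gtNy a_le; apply/fin_numPlt; rewrite a_gtNy (le_lt_trans a_le) ?ltry.
Qed.

Section ProxOfConvexFunction.
Context {R : realType} {n : nat} {phi : 'rV[R]_n -> \bar R}.
Hypotheses (phi_gtNy : forall x, (-oo < phi x)%E) (phi_convex : convex_fun phi).

Lemma scale_gtNy (s : R) x : 0 < s -> (-oo < s%:E * phi x)%E.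
Proof.
move=> s_gt0; have := phi_gtNy x.
case: (phi x) => [p _|_|//]; first by rewrite -EFinM ltNyr.
by rewrite muleC gt0_mulye ?lte_fin.
Qed.

Lemma convex_funZ (s : R) : 0 < s -> convex_fun (fun z => s%:E * phi z)%E.
Proof.
move=> s_gt0 x y t t01; rewrite /= muleCA (muleCA _ s%:E) -muleDr //.
  by rewrite lee_pmul2l ?lte_fin //; exact: phi_convex.
have /andP [t_gt0 t_lt1] := t01.
by apply: ltninfty_adde_def; rewrite inE /= ?scale_gtNy // subr_gt0.
Qed.

Lemma is_prox_fin_num {u x y} :
  phi x \is a fin_num -> is_prox phi u y -> phi y \is a fin_num.
Proof.
move=> /fineK px /(_ x); rewrite -px -EFinD => prox_x.
apply: (le_fin_num (phi_gtNy y) (le_trans _ prox_x)).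
by rewrite leeDl // lee_fin mulr_ge0 ?sqr_ge0.
Qed.

Lemma is_prox_subgradient {u x y} : phi x \is a fin_num -> is_prox phi u y ->
  fine (phi y) + dotv (u - y) (x - y) <= fine (phi x).
Proof.
move=> x_fin prox; have y_fin := is_prox_fin_num x_fin prox.
set p := fine (phi x); set q := fine (phi y).
have pE : phi x = p%:E by rewrite fineK.
have qE : phi y = q%:E by rewrite fineK.
apply: (ler_of_forall_itv01 (sqnorm2 (x - y) / 2)) => t t01.
have /andP [t_gt0 t_lt1] := t01.
set z := t *: x + (1 - t) *: y.
have z_le : (phi z <= (t * p + (1 - t) * q)%:E)%E.
  by rewrite EFinD !EFinM -pE -qE; exact: phi_convex.
have z_fin := le_fin_num (phi_gtNy z) z_le.
have zE : z - u = (y - u) + t *: (x - y) by apply/matrixP => i j; rewrite !mxE; ring.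
have wE : phi z = (fine (phi z))%:E by rewrite fineK.
move: z_le (prox z); rewrite qE wE -!EFinD !lee_fin !sqr_norm2 zE sqnorm2DZ !dotvBl.
move=> z_le prox_z; rewrite -(ler_pM2l t_gt0); lra.
Qed.

End ProxOfConvexFunction.

Section ProximalGradientStep.
Context {R : realType} {n : nat} {f : 'rV[R]_n -> R} {gradf : 'rV[R]_n -> 'rV[R]_n}
  {Psi : 'rV[R]_n -> \bar R} {L : R}.
Hypotheses (L_gt0 : 0 < L)
  (f_diff : forall x, differentiable f x /\ forall v, 'd f x v = dotv (gradf x) v)
  (gradf_lip : forall x y, x \in dom Psi -> y \in dom Psi ->
     norm2 (gradf x - gradf y) <= L * norm2 (x - y))
  (Psi_gtNy : forall x, (-oo < Psi x)%E) (Psi_convex : convex_fun Psi).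

Lemma in_dom_fin_num x : x \in dom Psi <-> Psi x \is a fin_num.
Proof.
rewrite /dom in_setE /=; split => [x_ltey|/fin_numPlt/andP[] //].
by apply/fin_numPlt; rewrite Psi_gtNy.
Qed.

Let phi z := ((L^-1)%:E * Psi z)%E.

Let L_inv_gt0 : 0 < L^-1. Proof. by rewrite invr_gt0. Qed.

Let phi_gtNy x : (-oo < phi x)%E. Proof. exact: scale_gtNy. Qed.

Let phi_convex : convex_fun phi. Proof. exact: convex_funZ. Qed.

Let phi_fin_num {x} : Psi x \is a fin_num -> phi x \is a fin_num.
Proof. by move=> x_fin; rewrite fin_numM. Qed.

Lemma is_TL_fin_num {x y} : Psi x \is a fin_num -> is_TL Psi gradf L x y ->
  Psi y \is a fin_num.
Proof.
move=> /phi_fin_num x_fin /(is_prox_fin_num phi_gtNy x_fin) y_fin.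
have -> : Psi y = (L%:E * phi y)%E by rewrite /phi muleA -EFinM mulfV ?gt_eqF ?mul1e.
by rewrite fin_numM.
Qed.

Lemma is_TL_subgradient {x y} : Psi x \is a fin_num -> is_TL Psi gradf L x y ->
  fine (Psi y) + dotv (gradf x) (y - x) + L * sqnorm2 (y - x) <= fine (Psi x).
Proof.
move=> x_fin TL; have y_fin := is_TL_fin_num x_fin TL.
have := is_prox_subgradient phi_gtNy phi_convex (phi_fin_num x_fin) TL.
rewrite /phi !fineM //= -(ler_pM2l L_gt0) mulrDr !mulrA mulfV ?gt_eqF // !mul1r.
have -> : L * dotv (x - L^-1 *: gradf x - y) (x - y)
          = dotv (gradf x) (y - x) + L * sqnorm2 (y - x).
  rewrite /dotv /sqnorm2 !mulr_sumr -big_split /=.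
  by apply: eq_bigr => i _; rewrite !mxE; field; rewrite gt_eqF.
lra.
Qed.

Lemma descent_on_dom {x y} : x \in dom Psi -> y \in dom Psi ->
  f y <= f x + dotv (gradf x) (y - x) + L / 2 * sqnorm2 (y - x).
Proof.
move=> x_dom y_dom; apply: descent_lemma => [|t t01]; first exact: f_diff.
have z_dom : x + t *: (y - x) \in dom Psi.
  have zE : t *: y + (1 - t) *: x = x + t *: (y - x).
    by apply/matrixP => i j; rewrite !mxE; ring.
  move/in_dom_fin_num: x_dom => /fineK xE; move/in_dom_fin_num: y_dom => /fineK yE.
  have := Psi_convex y x t t01; rewrite zE -xE -yE -!EFinM -EFinD.
  by move/(le_fin_num (Psi_gtNy _))/in_dom_fin_num.
have /andP [t_gt0 _] := t01.
apply: dotv_le_sqnorm2; first exact: mulr_gt0.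
have := gradf_lip _ _ z_dom x_dom; rewrite addrAC subrr add0r norm2Z gtr0_norm //.
rewrite -ler_sqr ?nnegrE ?norm2_ge0 ?mulr_ge0 ?norm2_ge0 ?(ltW t_gt0) ?(ltW L_gt0) //.
by rewrite !exprMn !sqr_norm2 mulrA.
Qed.

Lemma is_TL_decrease {x y} : Psi x \is a fin_num -> is_TL Psi gradf L x y ->
  f y + fine (Psi y) <= f x + fine (Psi x) - L / 2 * sqnorm2 (y - x).
Proof.
move=> x_fin TL; have y_fin := is_TL_fin_num x_fin TL.
have := descent_on_dom ((in_dom_fin_num x).2 x_fin) ((in_dom_fin_num y).2 y_fin).
by have := is_TL_subgradient x_fin TL; lra.
Qed.

End ProximalGradientStep.

Theorem theorem4 (R : realType) (n : nat)
  (f : 'rV[R]_n -> R) (gradf : 'rV[R]_n -> 'rV[R]_n)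
  (Psi : 'rV[R]_n -> \bar R) (L omega Fstar : R)
  (hL : 0 < L) (homega : 0 < omega)
  (hdiff : forall x, differentiable f x /\ forall v, 'd f x v = dotv (gradf x) v)
  (hlip : forall x y, x \in dom Psi -> y \in dom Psi ->
            norm2 (gradf x - gradf y) <= L * norm2 (x - y))
  (hproper : proper_fun Psi) (hconvex : convex_fun Psi) (hclosed : closed_fun Psi)
  (hFstar_att : exists xs, ((f xs)%:E + Psi xs = Fstar%:E)%E)
  (hFstar_min : forall x, (Fstar%:E <= (f x)%:E + Psi x)%E)
  (hdom : forall x y, x \in dom Psi -> is_TL Psi gradf L x y ->
     ((Num.sqrt (2 * omega))%:E * ((f y)%:E + Psi y - Fstar%:E)
        <= (norm2 (GL L x y))%:E)%E)
  (xk : nat -> 'rV[R]_n)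
  (hx0 : xk 0%N \in dom Psi)
  (hstep : forall k, is_TL Psi gradf L (xk k) (xk k.+1)) :
  forall k : nat,
    ((f (xk k))%:E + Psi (xk k) - Fstar%:E
      <= maxe (if k == 0%N then +oo else (4 * L / (omega * k%:R))%:E)
              (((Num.sqrt 2 / 2) ^+ k)%:E * ((f (xk 0%N))%:E + Psi (xk 0%N) - Fstar%:E)))%E.
Proof.
have [Psi_gtNy _] := hproper.
have fin k : Psi (xk k) \is a fin_num.
  elim: k => [|k IHk]; first exact/(in_dom_fin_num Psi_gtNy).
  exact: (is_TL_fin_num hL Psi_gtNy IHk (hstep k)).
pose r k := f (xk k) + fine (Psi (xk k)) - Fstar.
have gapE k : ((f (xk k))%:E + Psi (xk k) - Fstar%:E)%E = (r k)%:E.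
  by rewrite -(fineK (fin k)) -EFinN -!EFinD.
have r_ge0 k : 0 <= r k.
  by have := hFstar_min (xk k); rewrite -(fineK (fin k)) -EFinD lee_fin /r; lra.
have r_decr k : r k.+1 + omega / L * r k.+1 ^+ 2 <= r k.
  have := is_TL_decrease hL hdiff hlip Psi_gtNy hconvex (fin k) (hstep k).
  have := hdom _ _ ((in_dom_fin_num Psi_gtNy _).2 (fin k)) (hstep k).
  rewrite gapE -EFinM lee_fin => /(gradient_mapping_dominance hL homega (r_ge0 k.+1)).
  by rewrite /r; lra.
move=> k; rewrite !gapE.
have [->|k_neq0] := eqVneq k 0%N; first by rewrite le_max leey.
rewrite -EFinM le_max !lee_fin.
have k_gt0 : (0 < k)%N by rewrite lt0n.
have [rk|->] := sufficient_decrease_rate (divr_gt0 homega hL) r_ge0 r_decr k k_gt0;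
  last by rewrite orbT.
suff -> : 4 * L / (omega * k%:R) = 4 / (omega / L * k%:R) by rewrite rk.
by field; rewrite pnatr_eq0 k_neq0 !gt_eqF.
Qed.
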